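(* Fix $n,d$ and $J=\{j_1<\cdots<j_\ell\}\subseteq[n]$. There exists a path $C\in\mathcal{P}(n,d)$ with $\mathrm{st}(C)=J$ if and only if $j_k\geq 2k$ for all $1\le k\le\ell$ and $\ell\le d\le n-\ell$. Moreover, in this case such a path is unique.
   Context: $\mathcal{P}(n,d)$ is the set of words $C=C_1\cdots C_n$ in letters $\mathbf{e}$ (east step) and $\mathbf{n}$ (north step) with exactly $d$ letters $\mathbf{e}$. For $C\in\mathcal{P}(n,d)$: scan positions left to right and mark position $i$ with $C_i=\mathbf{e}$ if the number of $j<i$ with $C_j=\mathbf{n}$ equals the number of $j<i$ with $C_j=\mathbf{e}$ that are unmarked; $\mathrm{st}(C)$ is the set of unmarked positions $i$ with $C_i=\mathbf{e}$. *)

From mathcomp Require Import all_boot.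
Set Implicit Arguments. Unset Strict Implicit. Unset Printing Implicit Defensive.

(* A lattice word: [true] = east step e, [false] = north step n. *)
Definition path_word := seq bool.

Definition inP (n d : nat) (C : path_word) : bool :=
  (size C == n) && (count id C == d).

(* Marking scan.  [nn] = number of north steps seen so far,
   [ue] = number of unmarked east steps seen so far. *)
Fixpoint mark_aux (nn ue : nat) (C : path_word) : seq bool :=
  match C with
  | [::] => [::]
  | c :: C' =>
      if c then
        (if nn == ue then true :: mark_aux nn ue C'
         else false :: mark_aux nn ue.+1 C')
      else false :: mark_aux nn.+1 ue C'
  end.

Definition marks (C : path_word) : seq bool := mark_aux 0 0 C.

Definition st (C : path_word) : seq nat :=
  [seq i.+1 | i <- iota 0 (size C) & nth false C i && ~~ nth false (marks C) i].

From mathcomp Require Import all_boot.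
From mathcomp Require Import zify.

Set Implicit Arguments.
Unset Strict Implicit.
Unset Printing Implicit Defensive.

(* Let h be the number of north steps minus the number of unmarked east steps
   read so far: an east step is marked exactly when h = 0, and otherwise it
   lowers h by one, while a north step raises it.  So the indicator word b of
   the unmarked east steps keeps h positive before each of its 1s even when all
   other letters are read as north steps, which is the ballot condition
   j_k >= 2k; and comparing north steps with unmarked east steps gives
   l <= d <= n - l.  Conversely, b itself (all other letters north) has
   st = J, and as long as the final height is positive, the first north step
   after the last visit of h to 0 can be turned into a marked east step without
   changing b; this reaches every d up to n - l.  For uniqueness, two paths with
   the same b that first differ at some step continue at different heights, and
   the higher one can afford at most as many east steps as the lower one. *)

(* [unmarked h C] is the indicator word of the unmarked east steps of C when
   the scan starts with [h] more north steps than unmarked east steps. *)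
Fixpoint unmarked (h : nat) (C : path_word) : seq bool :=
  match C with
  | [::] => [::]
  | c :: C' =>
      if c then (if h is h'.+1 then true :: unmarked h' C' else false :: unmarked 0 C')
      else false :: unmarked h.+1 C'
  end.

Lemma size_unmarked h C : size (unmarked h C) = size C.
Proof. by elim: C h => [|[] C IH] [|h] //=; rewrite IH. Qed.

Lemma nth_unmarked nn ue C i : ue <= nn ->
  nth false (unmarked (nn - ue) C) i = nth false C i && ~~ nth false (mark_aux nn ue C) i.
Proof.
elim: C nn ue i => [|[] C IH] nn ue i Hle /=; first by rewrite !nth_nil.
- case: eqP => [<-|Hne].
    by rewrite subnn; case: i => [|i] //=; rewrite -(subnn nn) IH.
  have -> : nn - ue = (nn - ue.+1).+1 by lia.
  by case: i => [|i] //=; rewrite IH //; lia.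
- have -> : (nn - ue).+1 = nn.+1 - ue by lia.
  by case: i => [|i] //=; rewrite IH //; lia.
Qed.

Fixpoint positions (b : seq bool) : seq nat :=
  match b with
  | [::] => [::]
  | x :: b' => if x then 1 :: map succn (positions b') else map succn (positions b')
  end.

Lemma mem_positions b j : (j \in positions b) = (0 < j <= size b) && nth false b j.-1.
Proof.
have mem_succn (L : seq nat) i : (i \in map succn L) = if i is i'.+1 then i' \in L else false.
  by case: i => [|i]; [apply/mapP => -[] | exact: (mem_map succn_inj)].
elim: b j => [|x b IH] j /=; first by rewrite nth_nil andbF.
by case: x; rewrite ?in_cons mem_succn; case: j => [|[|j]] //=; rewrite IH.
Qed.

Lemma size_positions b : size (positions b) = count id b.
Proof. by elim: b => [|[] b IH] //=; rewrite size_map IH. Qed.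

Lemma sorted_positions b : sorted ltn (positions b).
Proof.
elim: b => [|[] b IH] /=; rewrite ?sorted_map //.
rewrite path_sortedE; last exact: ltn_trans.
rewrite sorted_map IH andbT; apply/allP => _ /mapP [y Hy ->].
by move: Hy; rewrite mem_positions; case: y.
Qed.

Lemma positions_inj b1 b2 : size b1 = size b2 -> positions b1 = positions b2 -> b1 = b2.
Proof.
move=> Hs He; apply: (eq_from_nth (x0 := false) Hs) => i Hi.
by have := mem_positions b1 i.+1; rewrite He mem_positions /= -Hs Hi.
Qed.

Lemma positions_iota b :
  [seq i.+1 | i <- iota 0 (size b) & nth false b i] = positions b.
Proof.
elim: b => [|x b IH] //=.
rewrite -[in iota 1 _](addn0 1) iotaDl -[map (addn 1) _]/(map succn _) filter_map.
by case: x => /=; rewrite -IH -map_comp.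
Qed.

Lemma st_unmarked C : st C = positions (unmarked 0 C).
Proof.
rewrite /st -positions_iota size_unmarked; congr map; apply: eq_filter => i.
by rewrite /marks -nth_unmarked.
Qed.

(* Reads every 0 of [b] as a north step and every 1 as an unmarked east step. *)
Fixpoint admissible (h : nat) (b : seq bool) : bool :=
  match b with
  | [::] => true
  | x :: b' => if x then (if h is h'.+1 then admissible h' b' else false)
               else admissible h.+1 b'
  end.

Lemma admissibleS h b : admissible h b -> admissible h.+1 b.
Proof. by elim: b h => [|[] b IH] [|h] //=; apply: IH. Qed.

Lemma admissible_ballot h b : admissible h b <->
  (forall k, k < size (positions b) -> 2 * k.+1 <= nth 0 (positions b) k + h).
Proof.
elim: b h => [|[] b IH] h //=; last first.
  rewrite IH size_map; split=> H k Hk; have := H k Hk; rewrite (nth_map 0) //; lia.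
case: h => [|h]; first by split=> // /(_ 0 isT) /=; lia.
rewrite IH size_map; split=> H k.
- case: k => [|k] /= Hk; first lia.
  by have := H k Hk; rewrite (nth_map 0) //; lia.
- move=> Hk; have := H k.+1 Hk; rewrite /= (nth_map 0) //; lia.
Qed.

Lemma admissible_unmarked h C : admissible h (unmarked h C).
Proof. by elim: C h => [|[] C IH] [|h] //=; apply: admissibleS. Qed.

Lemma unmarked_admissible h b : admissible h b -> unmarked h b = b.
Proof. by elim: b h => [|[] b IH] [|h] //= /IH ->. Qed.

Lemma count_unmarked_le h C : count id (unmarked h C) <= count id C.
Proof. by elim: C h => [|[] C IH] [|h] //=; rewrite ?ltnS ?leqW ?IH. Qed.

Fixpoint final_height (h : nat) (C : path_word) : nat :=
  match C with
  | [::] => h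
  | c :: C' =>
      if c then (if h is h'.+1 then final_height h' C' else final_height 0 C')
      else final_height h.+1 C'
  end.

Lemma final_height_count h C :
  final_height h C + count id (unmarked h C) = h + (size C - count id C).
Proof.
elim: C h => [|c C IH] h /=; first lia.
have := count_size id C.
by case: c; case: h => [|h] /=; [move: (IH 0) | move: (IH h) | move: (IH 1) | move: (IH h.+2)]; lia.
Qed.

Fixpoint min_height (h : nat) (C : path_word) : nat :=
  match C with
  | [::] => h
  | c :: C' =>
      minn h (if c then (if h is h'.+1 then min_height h' C' else min_height 0 C')
              else min_height h.+1 C')
  end.

Lemma min_height0 C : min_height 0 C = 0.
Proof. by case: C => [|c C] //=; rewrite min0n. Qed.

Lemma unmarked_lift h C : 0 < min_height h.+1 C -> unmarked h C = unmarked h.+1 C.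
Proof.
elim: C h => [|[] C IH] h //=; rewrite leq_min => /andP [_].
  by case: h => [|h]; [rewrite min_height0 | move/IH->].
by move/IH->.
Qed.

Lemma add_marked_east h C : 0 < final_height h C -> min_height h C = 0 ->
  exists C', [/\ size C' = size C, count id C' = (count id C).+1
             & unmarked h C' = unmarked h C].
Proof.
have minSn0 k m : minn k.+1 m = 0 -> m = 0 by lia.
elim: C h => [|c C IH] h /=; first by move=> + h0; rewrite h0.
case: c; case: h => [|h] Hf.
- move=> _; have [X [X1 X2 X3]] := IH 0 Hf (min_height0 C).
  by exists (true :: X); rewrite /= X1 X2 X3.
- move/minSn0 => Hm; have [X [X1 X2 X3]] := IH h Hf Hm.
  by exists (true :: X); rewrite /= X1 X2 X3.
- move=> _; have [Hm|Hm] := posnP (min_height 1 C).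
    have [X [X1 X2 X3]] := IH 1 Hf Hm.
    by exists (false :: X); rewrite /= X1 X2 X3.
  (* the height never returns to 0: this north step may become a marked east step *)
  by exists (true :: C); rewrite /= (unmarked_lift Hm).
- move/minSn0 => Hm; have [X [X1 X2 X3]] := IH h.+2 Hf Hm.
  by exists (false :: X); rewrite /= X1 X2 X3.
Qed.

Lemma unmarked_exists b d : admissible 0 b -> count id b <= d <= size b - count id b ->
  exists C, [/\ size C = size b, count id C = d & unmarked 0 C = b].
Proof.
move=> Hb /andP [Hbd]; rewrite -(subnKC Hbd); elim: (d - _) => [|k IH] Hk.
  by exists b; rewrite addn0 unmarked_admissible.
rewrite addnS in Hk *; have [C [HCs HCd HCb]] := IH (ltnW Hk).
have := final_height_count 0 C; rewrite HCb HCs HCd => Hf.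
have Hpos : 0 < final_height 0 C by lia.
have [X [X1 X2 X3]] := add_marked_east Hpos (min_height0 C).
by exists X; rewrite X1 X2 X3 HCs HCd HCb.
Qed.

Lemma unmarked_exists_iff b d :
  (exists C, [/\ size C = size b, count id C = d & unmarked 0 C = b]) <->
  admissible 0 b /\ count id b <= d <= size b - count id b.
Proof.
split=> [[C [<- <- <-]] | [Hb Hd]]; last exact: unmarked_exists.
split; first exact: admissible_unmarked.
have := final_height_count 0 C; have := count_size id C.
by have := count_unmarked_le 0 C; lia.
Qed.

Lemma unmarked_eq_count_le h1 h2 C1 C2 :
  unmarked h1 C1 = unmarked h2 C2 -> h1 < h2 -> count id C2 <= count id C1.
Proof.
elim: C1 C2 h1 h2 => [|c1 C1 IH] [|c2 C2] h1 h2 //=; first by case: c2; case: h2.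
by case: c1; case: c2; case: h1 => [|h1]; case: h2 => [|h2] //= [] /IH; lia.
Qed.

Lemma unmarked_inj h C1 C2 :
  unmarked h C1 = unmarked h C2 -> count id C1 = count id C2 -> C1 = C2.
Proof.
elim: C1 C2 h => [|c1 C1 IH] [|c2 C2] h //=; try by [case: c1 {IH}; case: h | case: c2; case: h].
case: c1; case: c2; case: h => [|h] //= [] E Hc; try by rewrite (IH _ _ E) //; lia.
- by have := unmarked_eq_count_le E (ltnSn 0); lia.
- by have := unmarked_eq_count_le (esym E) (ltnSn 0); lia.
Qed.

Definition indicator (n : nat) (J : seq nat) : seq bool := mkseq (fun i => i.+1 \in J) n.

Lemma positions_indicator n J : sorted ltn J -> all (fun j => 0 < j <= n) J ->
  positions (indicator n J) = J.
Proof.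
move=> HJs HJn; apply: (irr_sorted_eq ltn_trans ltnn (sorted_positions _) HJs) => j.
rewrite mem_positions size_mkseq; case: (posnP j) => [->|j_gt0] /=.
  by apply/esym/negP => /(allP HJn).
case: (leqP j n) => Hj /=; first by rewrite nth_mkseq ?prednK //; lia.
by apply/esym/negP => /(allP HJn) /=; lia.
Qed.

Lemma st_indicator n J C : sorted ltn J -> all (fun j => 0 < j <= n) J ->
  size C = n -> st C = J <-> unmarked 0 C = indicator n J.
Proof.
move=> HJs HJn HC; rewrite st_unmarked -{1}(positions_indicator HJs HJn).
split=> [|-> //]; apply: positions_inj.
by rewrite size_unmarked size_mkseq.
Qed.

Theorem proposition4p14 (n d : nat) (J : seq nat)
  (HJs : sorted ltn J) (HJn : all (fun j => (1 <= j <= n)%N) J) :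
  ((exists C : path_word, inP n d C /\ st C = J) <->
   ((forall k, (k < size J)%N -> (2 * k.+1 <= nth 0 J k)%N) /\
    (size J <= d <= n - size J)%N)) /\
  (forall C1 C2 : path_word, inP n d C1 -> inP n d C2 ->
     st C1 = J -> st C2 = J -> C1 = C2).
Proof.
pose b := indicator n J.
have sizeb : size b = n by rewrite size_mkseq.
have countb : count id b = size J by rewrite -size_positions positions_indicator.
have stE C : size C = n -> st C = J <-> unmarked 0 C = b by exact: st_indicator.
have existsE : (exists C, inP n d C /\ st C = J) <->
    exists C, [/\ size C = size b, count id C = d & unmarked 0 C = b].
  rewrite sizeb; split=> -[C].
  - by move=> [/andP [/eqP HC /eqP Hd] /(stE _ HC) HB]; exists C.
  - by move=> [HC Hd /(stE _ HC) HS]; exists C; rewrite /inP HC Hd !eqxx.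
split.
- rewrite existsE unmarked_exists_iff admissible_ballot positions_indicator // sizeb countb.
  by split=> -[H Hd]; split=> // k /H; rewrite addn0.
- move=> C1 C2 /andP [/eqP H1 /eqP <-] /andP [/eqP H2 /eqP Hd] S1 S2.
  apply: (@unmarked_inj 0); last by [].
  by rewrite ((stE _ H1).1 S1) ((stE _ H2).1 S2).
Qed.
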